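(* For any positive integer $n$, there exists a $(3;\ 6^n,\ 3^n,\ 3)$ perfect hash family.
   Context: Let $r,m,q',t$ be integers with $m\ge q'\ge t\ge2$. An $(r;m,q',t)$ perfect hash family (PHF) is a set $\mathcal{X}$ of $r$ functions from a set $\mathcal{B}$ with $|\mathcal{B}|=m$ to a set $\mathcal{C}$ with $|\mathcal{C}|=q'$ such that for every $\mathcal{T}\subseteq\mathcal{B}$ with $|\mathcal{T}|=t$ there is at least one $\varphi\in\mathcal{X}$ whose restriction to $\mathcal{T}$ is injective. Equivalently, an $r\times m$ array over $q'$ symbols in which every $r\times t$ subarray has at least one row with $t$ distinct symbols. *)

From mathcomp Require Import all_boot.
Set Implicit Arguments. Unset Strict Implicit. Unset Printing Implicit Defensive.

(* An (r; m, q', t) perfect hash family: a family X of r functions from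
   B = 'I_m (|B| = m) to C = 'I_q' (|C| = q'), with m >= q' >= t >= 2, such that
   every t-subset T of B has some X i injective on T.
   (Equivalently an r x m array over q' symbols; repeated rows are allowed.) *)
Definition is_PHF (r m q' t : nat) (X : 'I_r -> 'I_m -> 'I_q') : Prop :=
  [/\ q' <= m, t <= q', 2 <= t &
      forall T : {set 'I_m}, #|T| = t ->
        exists i : 'I_r, {in T &, injective (X i)}].

Definition PHF_exists (r m q' t : nat) : Prop :=
  exists X : 'I_r -> 'I_m -> 'I_q', @is_PHF r m q' t X.

(* Call a family of maps strong if it is a perfect hash family of strength 3
   in which, moreover, two distinct points collide in at most one row.  Strong
   families with at least three rows are closed under the row-wise product: a
   triple whose two projections both fail to be injective is, up to order,
   (x,u), (x,u'), (x',u), and its pairs can only collide in the row where u, u'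
   collide or in the row where x, x' collide, so a third row separates it.
   The induction starts from the six vertices of K_{3,3}, with row k sending
   the left vertex a to a and the right vertex b to b - k in Z/3: two vertices
   collide in at most one row and those on the same side never do, so a triple
   has at most two collisions and again some row separates it. *)

From mathcomp Require Import all_boot ssralg finalg zmodp.
Import GRing.Theory.

Set Implicit Arguments.
Unset Strict Implicit.
Unset Printing Implicit Defensive.

Lemma uniq3E (T : eqType) (a b c : T) :
  uniq [:: a; b; c] = [&& a != b, a != c & b != c].
Proof. by rewrite /= !inE negb_or andbT andbA. Qed.

Lemma not_uniq3 (T : eqType) (a b c : T) :
  ~~ uniq [:: a; b; c] -> [\/ a = b, a = c | b = c].
Proof.
rewrite uniq3E !negb_and !negbK.
by case/or3P=> /eqP; [apply: Or31 | apply: Or32 | apply: Or33].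
Qed.

Lemma perm3_12 (T : eqType) (a b c : T) : perm_eq [:: b; a; c] [:: a; b; c].
Proof. by apply/permP => P /=; rewrite addnCA. Qed.

Lemma perm3_23 (T : eqType) (a b c : T) : perm_eq [:: a; c; b] [:: a; b; c].
Proof. by apply/permP => P /=; rewrite (addnCA (P c)). Qed.

Lemma perm3_13 (T : eqType) (a b c : T) : perm_eq [:: c; b; a] [:: a; b; c].
Proof.
by apply/permP => P /=; rewrite !addn0 (addnC (P b)) addnCA (addnC (P c)).
Qed.

Lemma exists_notin_set (T : finType) (S : {set T}) :
  #|S| < #|T| -> exists x, x \notin S.
Proof.
rewrite -(cardsC S) -addn1 leq_add2l => /card_gt0P [x].
by rewrite inE; exists x.
Qed.

Section Families.
Variables (I A B : finType).
Implicit Types (X : I -> A -> B) (s : seq A).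

Definition collisions X (a b : A) : {set I} := [set i | X i a == X i b].

Definition bad_rows X s : {set I} := [set i | ~~ uniq (map (X i) s)].

Definition perfect3 X :=
  forall s, size s = 3 -> uniq s -> exists i, uniq (map (X i) s).

Definition unique_collision X := forall a b, a != b -> #|collisions X a b| <= 1.

Definition strong_perfect3 X := perfect3 X /\ unique_collision X.

Lemma collisions_refl X a : collisions X a a = setT.
Proof. by apply/setP => i; rewrite !inE eqxx. Qed.

Lemma bad_rows3 X a b c :
  bad_rows X [:: a; b; c] =
    collisions X a b :|: collisions X a c :|: collisions X b c.
Proof. by apply/setP => i; rewrite !inE uniq3E !negb_and !negbK orbA. Qed.

Lemma bad_rows_perm X s t : perm_eq s t -> bad_rows X s = bad_rows X t.
Proof.
by move=> st; apply/setP => i; rewrite !inE (perm_uniq (perm_map _ st)).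
Qed.

Lemma exists_good_row X s :
  #|bad_rows X s| < #|I| -> exists i, uniq (map (X i) s).
Proof. by case/exists_notin_set => i; rewrite inE negbK; exists i. Qed.

Lemma card_bad_rows3 X a b c :
  #|bad_rows X [:: a; b; c]| <=
    #|collisions X a b| + #|collisions X a c| + #|collisions X b c|.
Proof.
rewrite bad_rows3; apply: leq_trans (leq_card_setU _ _) _.
by rewrite leq_add2r leq_card_setU.
Qed.

End Families.

Lemma strong_perfect3_inj (I A B A' B' : finType) (X : I -> A -> B)
    (f : A' -> A) (g : B -> B') :
  injective f -> injective g -> strong_perfect3 X ->
  strong_perfect3 (fun i a => g (X i (f a))).
Proof.
move=> f_inj g_inj [pX uX]; split=> [s s3 us | a b ab].
  have [i ui] : exists i, uniq (map (X i) (map f s)).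
    by apply: pX; rewrite ?size_map ?map_inj_uniq.
  by exists i; rewrite map_comp (map_inj_uniq g_inj) map_comp.
have -> : collisions (fun i a => g (X i (f a))) a b = collisions X (f a) (f b).
  by apply/setP => i; rewrite !inE (inj_eq g_inj).
by apply: uX; rewrite (inj_eq f_inj).
Qed.

Lemma strong_perfect3_resize (I A B A' B' : finType) (X : I -> A -> B) :
  #|A'| <= #|A| -> #|B| <= #|B'| -> strong_perfect3 X ->
  exists X' : I -> A' -> B', strong_perfect3 X'.
Proof.
move=> leA leB sX.
pose f (a : A') : A := enum_val (widen_ord leA (enum_rank a)).
pose g (b : B) : B' := enum_val (widen_ord leB (enum_rank b)).
have f_inj : injective f.
  by move=> a a' /enum_val_inj [] /ord_inj /enum_rank_inj.
have g_inj : injective g.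
  by move=> b b' /enum_val_inj [] /ord_inj /enum_rank_inj.
by exists (fun i a => g (X i (f a))); apply: strong_perfect3_inj.
Qed.

Section Product.
Variables (I A1 A2 B1 B2 : finType) (X : I -> A1 -> B1) (Y : I -> A2 -> B2).
Hypotheses (uX : unique_collision X) (uY : unique_collision Y).

Definition family_prod i (p : A1 * A2) : B1 * B2 := (X i p.1, Y i p.2).
Local Notation h := family_prod.

Lemma collisions_prod p q :
  collisions h p q = collisions X p.1 q.1 :&: collisions Y p.2 q.2.
Proof. by apply/setP => i; rewrite !inE xpair_eqE. Qed.

Lemma unique_collision_prod : unique_collision h.
Proof.
move=> [x u] [x' u']; rewrite collisions_prod xpair_eqE negb_and /=.
case/orP=> [xx' | uu'].
  exact: leq_trans (subset_leq_card (subsetIl _ _)) (uX xx').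
exact: leq_trans (subset_leq_card (subsetIr _ _)) (uY uu').
Qed.

Lemma card_bad_rows_corner x x' u u' : x != x' -> u != u' ->
  #|bad_rows h [:: (x, u); (x, u'); (x', u)]| <= 2.
Proof.
move=> xx' uu'; rewrite bad_rows3.
have sub : collisions h (x, u') (x', u) \subset collisions h (x, u) (x', u).
  by rewrite !collisions_prod /= collisions_refl setIT subsetIl.
rewrite (setUidPl (subset_trans sub (subsetUr _ _))).
apply: leq_trans (leq_card_setU _ _) _.
rewrite -[2]/(1 + 1) leq_add // unique_collision_prod //.
all: by rewrite xpair_eqE eqxx ?andbT.
Qed.

Lemma card_bad_rows_prod p q r :
  uniq [:: p; q; r] ->
  ~~ uniq [:: p.1; q.1; r.1] -> ~~ uniq [:: p.2; q.2; r.2] ->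
  #|bad_rows h [:: p; q; r]| <= 2.
Proof.
wlog e1 : p q r / p.1 = q.1.
  move=> corner upqr n1 n2; case: (not_uniq3 n1) => e.
  - exact: corner.
  - rewrite -(bad_rows_perm _ (perm3_23 p q r)).
    by apply: (corner _ _ _ e); rewrite (perm_uniq (perm3_23 _ _ _)).
  - rewrite -(bad_rows_perm _ (perm3_13 p q r)).
    by apply: (corner _ _ _ (esym e)); rewrite (perm_uniq (perm3_13 _ _ _)).
wlog e2 : p q r e1 / p.2 = r.2.
  move=> corner upqr n1 n2; case: (not_uniq3 n2) => e.
  - move: upqr; rewrite uniq3E.
    by rewrite [p]surjective_pairing [q]surjective_pairing e1 e eqxx.
  - exact: corner.
  - rewrite -(bad_rows_perm _ (perm3_12 p q r)).
    by apply: (corner _ _ _ (esym e1) e); rewrite (perm_uniq (perm3_12 _ _ _)).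
move=> + _ _; rewrite uniq3E; case: p q r e1 e2 => [x u] [_ u'] [x' _] /= <- <-.
rewrite !xpair_eqE !eqxx andbT => /and3P [uu' xx' _].
exact: card_bad_rows_corner.
Qed.

Lemma perfect3_prod : 2 < #|I| -> perfect3 X -> perfect3 Y -> perfect3 h.
Proof.
move=> rows3 pX pY [|p [|q [|r []]]] // _ upqr.
have [u1|n1] := boolP (uniq [:: p.1; q.1; r.1]).
  have [i ui] := pX [:: p.1; q.1; r.1] erefl u1.
  by exists i; apply: (@map_uniq _ _ fst).
have [u2|n2] := boolP (uniq [:: p.2; q.2; r.2]).
  have [i ui] := pY [:: p.2; q.2; r.2] erefl u2.
  by exists i; apply: (@map_uniq _ _ snd).
by apply/exists_good_row/(leq_ltn_trans _ rows3)/card_bad_rows_prod.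
Qed.

End Product.

Lemma strong_perfect3_prod (I A1 A2 B1 B2 : finType)
    (X : I -> A1 -> B1) (Y : I -> A2 -> B2) :
  2 < #|I| -> strong_perfect3 X -> strong_perfect3 Y ->
  strong_perfect3 (family_prod X Y).
Proof.
move=> rows3 [pX uX] [pY uY].
by split; [apply: perfect3_prod | apply: unique_collision_prod].
Qed.

Section Bipartite.
Variable G : finZmodType.

Definition bipartite_family (k : G) (p : bool * G) : G :=
  if p.1 then (p.2 - k)%R else p.2.

Lemma card_collisions_bipartite (s t : bool) (a b : G) :
  (s, a) != (t, b) -> #|collisions bipartite_family (s, a) (t, b)| <= (s != t).
Proof.
rewrite xpair_eqE /collisions /bipartite_family; case: s; case: t => /= ab.
- rewrite leqn0 cards_eq0; apply/eqP/setP => k.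
  by rewrite !inE (inj_eq (addIr _)) (negbTE ab).
- apply/card_le1_eqP => k k'; rewrite !inE => /eqP <- /eqP.
  by move/addrI/oppr_inj.
- apply/card_le1_eqP => k k'; rewrite !inE => /eqP -> /eqP.
  by move/addrI/oppr_inj.
- by rewrite leqn0 cards_eq0; apply/eqP/setP => k; rewrite !inE (negbTE ab).
Qed.

Lemma unique_collision_bipartite : unique_collision bipartite_family.
Proof.
move=> [s a] [t b] /card_collisions_bipartite /leq_trans; apply.
exact: leq_b1.
Qed.

Lemma perfect3_bipartite : 2 < #|G| -> perfect3 bipartite_family.
Proof.
move=> G3 [|[s1 a1] [|[s2 a2] [|[s3 a3] []]]] // _.
rewrite uniq3E => /and3P [n12 n13 n23].
apply/exists_good_row/(leq_ltn_trans _ G3).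
apply: leq_trans (card_bad_rows3 _ _ _ _) _.
have b12 := card_collisions_bipartite n12.
have b13 := card_collisions_bipartite n13.
have b23 := card_collisions_bipartite n23.
apply: leq_trans (leq_add (leq_add b12 b13) b23) _.
by case: s1 s2 s3 {n12 n13 n23 b12 b13 b23} => [] [] [].
Qed.

End Bipartite.

Lemma exists_strong_perfect3 n : 0 < n ->
  exists X : 'I_3 -> 'I_(6 ^ n) -> 'I_(3 ^ n), strong_perfect3 X.
Proof.
have base : strong_perfect3 (@bipartite_family 'I_3).
  split; last exact: unique_collision_bipartite.
  by apply: perfect3_bipartite; rewrite card_ord.
elim: n => [// | [|n] IH _].
  apply: strong_perfect3_resize base;
  by rewrite ?card_prod !card_ord ?card_bool.
have [X sX] := IH isT.
apply: strong_perfect3_resize (strong_perfect3_prod _ sX base);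
  by rewrite ?card_prod !card_ord ?card_bool ?expnSr.
Qed.

Lemma perfect3_is_PHF r m q (X : 'I_r -> 'I_m -> 'I_q) :
  q <= m -> 3 <= q -> perfect3 X -> @is_PHF r m q 3 X.
Proof.
move=> qm q3 pX; split=> // T T3.
have [|i ui] := pX (enum T) _ (enum_uniq T); first by rewrite -cardE.
by exists i; apply/dinjectiveP.
Qed.

Theorem lemma8 (n : nat) (hn : 0 < n) : PHF_exists 3 (6 ^ n) (3 ^ n) 3.
Proof.
have [X [pX _]] := exists_strong_perfect3 hn.
exists X; apply: perfect3_is_PHF pX.
  by rewrite leq_exp2r.
by rewrite -{1}(expn1 3) leq_pexp2l.
Qed.
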